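(* Let $R$ be a commutative ring, $n\ge 5$ and $d\ge1$. The assignment $(\Delta,w)\mapsto F_{(\Delta,w)}$ is a bijection between the set of balanced $R$-weighted $(d-1)$-complexes on $[n-1]$ and the set of nonzero homogeneous elements of $\operatorname{Cox}(\overline{\mathcal{M}}_{0,n})$ of degree $d$ that are not divisible by any exceptional section $x_I$. Moreover, for every balancing $w$ of a fixed complex $\Delta$, the element $F_{(\Delta,w)}$ is homogeneous of class $D_\Delta$.
   Context: Setup: $[m]=\{1,\dots,m\}$. Fix a Kapranov–Hassett isomorphism $\overline{\mathcal M}_{0,n}\cong\operatorname{Bl}\mathbb P^{n-3}$ over $\operatorname{Spec}R$: the iterated blow-up of $\mathbb P^{n-3}$ at points $q_1,\dots,q_{n-1}$ in general linear position and then along strict transforms of linear spans of subsets of these points, in order of increasing dimension. Then $\operatorname{Pic}(\overline{\mathcal M}_{0,n})=\mathbb ZH\oplus\bigoplus_I\mathbb ZE_I$, the sum over $I\subseteq[n-1]$ with $1\le|I|\le n-4$, where $H$ is the pulled-back hyperplane class and $E_I$ the exceptional divisor over the span of $\{q_i:i\in I\}$; the degree of a class is its $H$-coefficient. Let $P=R[y_1,\dots,y_{n-1},(x_I)_I]$, graded by $\operatorname{Pic}$ via $[x_I]=E_I$, $[y_i]=H-\sum_{I\not\ni i}E_I$, and set $z_i=\prod_{I\ni i}x_I$. Then $\operatorname{Cox}(\overline{\mathcal M}_{0,n})=\bigoplus_D H^0(\overline{\mathcal M}_{0,n},D)$ is identified with the graded subring $R[(x_I^{\pm1})_I,(y_i/z_i-y_j/z_j)_{i,j}]\cap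 P$, where $x_I$ is the section defining $E_I$; the degree of a homogeneous element equals its total degree in the $y_i$. Complexes: a $k$-simplex on $A$ is a multiset of cardinality $k+1$ with entries in $A$; a $k$-complex is a finite set of distinct $k$-simplices; $\operatorname{mult}_a(\sigma)$ is the multiplicity of $a$ in $\sigma$. An $R$-weighted complex assigns a nonzero $w_\sigma\in R$ to each simplex. With $c(\sigma,S)=\prod_a\binom{\operatorname{mult}_a\sigma}{\operatorname{mult}_aS}$, a weighted $k$-complex is balanced in degree $j$ if $\sum_\sigma c(\sigma,S)w_\sigma=0$ for every multiset $S$ of cardinality $j$ with entries in $A$, and balanced if balanced in every degree $j\in\{0,\dots,k\}$ with $j\le k-1$... precisely: in every degree $0\le j\le k-1$. For a balanced weighted $(d-1)$-complex $(\Delta,w)$ on $[n-1]$, let $y_\sigma=\prod_iy_i^{\operatorname{mult}_i\sigma}$, $z_\sigma=\prod_iz_i^{\operatorname{mult}_i\sigma}$, $f=\sum_{\sigma\in\Delta}w_\sigma y_\sigma/z_\sigma$, and $F_{(\Delta,w)}=\big(\prod_I x_I^{a_I}\big)f$ with $a_I=\max_{\sigma\in\Delta}\sum_{i\in I}\operatorname{mult}_i(\sigma)$ (clearing denominators minimally). For any $(d-1)$-complex $\Delta$ on $[n-1]$, $D_\Delta=dH-\sum_I\big(d-\max_{\sigma\in\Delta}\sum_{i\in I}\operatorname{mult}_i(\sigma)\big)E_I$. *)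

From HB Require Import structures.
From mathcomp Require Import all_boot all_order all_algebra.
Set Implicit Arguments. Unset Strict Implicit. Unset Printing Implicit Defensive.
Import Order.TTheory GRing.Theory Num.Theory.

Fixpoint mpoly (R : comNzRingType) (k : nat) : comNzRingType :=
  match k with 0 => R | k'.+1 => {poly (mpoly R k')} end.

(* the variable X_i (X_i = 0 if i >= k, never used) *)
Fixpoint mvar (R : comNzRingType) (k i : nat) : mpoly R k :=
  match k return mpoly R k with
  | 0 => 0%R
  | k'.+1 => if i == k' then (('X)%R : {poly mpoly R k'}) else ((mvar R k' i)%:P%R : {poly mpoly R k'})
  end.

Fixpoint mconst (R : comNzRingType) (k : nat) (c : R) : mpoly R k :=
  match k return mpoly R k with
  | 0 => c
  | k'.+1 => ((mconst k' c)%:P%R : {poly mpoly R k'})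
  end.

(* coefficient of the monomial prod_{i<k} X_i^(e i) *)
Fixpoint mcoef (R : comNzRingType) (k : nat) : mpoly R k -> (nat -> nat) -> R :=
  match k return mpoly R k -> (nat -> nat) -> R with
  | 0 => fun p _ => p
  | k'.+1 => fun (p : {poly mpoly R k'}) e => mcoef (p`_(e k'))%R e
  end.

Definition validI (n : nat) (I : {set 'I_(n-1)}) : bool :=
  (1 <= #|I|) && (#|I| <= n - 4).

Definition SI (n : nat) : seq {set 'I_(n-1)} :=
  [seq I <- enum {set 'I_(n-1)} | validI I].

Definition nvars (n : nat) : nat := (n - 1) + size (SI n).

Definition P (R : comNzRingType) (n : nat) : comNzRingType := mpoly R (nvars n).

(* variable y_i has index i, variable x_I has index (n-1) + (position of I in SI n) *)
Definition xidx (n : nat) (I : {set 'I_(n-1)}) : nat := (n - 1) + index I (SI n).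

Definition yv (R : comNzRingType) (n : nat) (i : 'I_(n-1)) : P R n :=
  mvar R (nvars n) i.
Definition xv (R : comNzRingType) (n : nat) (I : {set 'I_(n-1)}) : P R n :=
  mvar R (nvars n) (xidx I).
Definition zv (R : comNzRingType) (n : nat) (i : 'I_(n-1)) : P R n :=
  (\prod_(I <- SI n | i \in I) xv R I)%R.

(* A class  hH + sum_I c_I E_I  is a pair (h, c); only c_I for valid I matter. *)
Definition Pic (n : nat) : Type := (int * ({set 'I_(n-1)} -> int))%type.

Definition eq_class (n : nat) (D1 D2 : Pic n) : Prop :=
  D1.1 = D2.1 /\ forall I, validI I -> D1.2 I = D2.2 I.

(* class of the monomial with exponent vector e:
   [y_i] = H - sum_{I not containing i} E_I,  [x_I] = E_I *)
Definition mono_class (n : nat) (e : nat -> nat) : Pic n :=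
  ((\sum_(i : 'I_(n-1)) Posz (e i))%R,
   fun I => (Posz (e (xidx I)) - \sum_(i : 'I_(n-1) | i \notin I) Posz (e i))%R).

Definition homog_of (R : comNzRingType) (n : nat) (f : P R n) (D : Pic n) : Prop :=
  forall e : nat -> nat, mcoef f e != 0%R -> eq_class (mono_class n e) D.

Definition homog_deg (R : comNzRingType) (n : nat) (f : P R n) (d : nat) : Prop :=
  exists D : Pic n, homog_of f D /\ D.1 = Posz d.

(* R-subalgebra of P generated by the x_I and v_ij = y_i z_j - y_j z_i
   (note y_i/z_i - y_j/z_j = v_ij / (z_i z_j)). *)
Inductive gen_alg (R : comNzRingType) (n : nat) : P R n -> Prop :=
  | ga_const (c : R) : gen_alg (mconst (nvars n) c)
  | ga_x (I : {set 'I_(n-1)}) : validI I -> gen_alg (xv R I)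
  | ga_v (i j : 'I_(n-1)) : gen_alg (yv R i * zv R j - yv R j * zv R i)%R
  | ga_opp f : gen_alg f -> gen_alg (- f)%R
  | ga_add f g : gen_alg f -> gen_alg g -> gen_alg (f + g)%R
  | ga_mul f g : gen_alg f -> gen_alg g -> gen_alg (f * g)%R.

(* f in P lies in R[(x_I^{+-1}), (y_i/z_i - y_j/z_j)] (inside the Laurent ring
   R[y, x^{+-1}]) iff some monomial in the x_I times f lies in gen_alg. *)
Definition inCox (R : comNzRingType) (n : nat) (f : P R n) : Prop :=
  exists a : {set 'I_(n-1)} -> nat,
    gen_alg ((\prod_(I <- SI n) xv R I ^+ a I) * f)%R.

Definition divCox (R : comNzRingType) (n : nat) (I : {set 'I_(n-1)}) (f : P R n) : Prop :=
  exists2 g : P R n, inCox g & f = (xv R I * g)%R.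

(* a (d-1)-simplex on [n-1]: a multiset of cardinality d, given by its
   multiplicity function (multiplicities are <= d) *)
Definition simplex (n d : nat) : finType := {ffun 'I_(n-1) -> 'I_d.+1}.

Definition mult_size (n d : nat) (s : simplex n d) : nat := \sum_i (s i : nat).

Definition is_complex (n d : nat) (Delta : {set simplex n d}) : Prop :=
  forall s, s \in Delta -> mult_size s = d.

(* An R-weighted (d-1)-complex (Delta, w) (w_s nonzero for s in Delta) is
   encoded by the function W with W s = w_s on Delta and W s = 0 off Delta;
   thus Delta = support of W. *)
Definition supp (R : comNzRingType) (n d : nat) (W : {ffun simplex n d -> R}) :
  {set simplex n d} := [set s | W s != 0%R].

Definition is_wcomplex (R : comNzRingType) (n d : nat) (W : {ffun simplex n d -> R}) : Prop :=
  is_complex (supp W).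

Definition cmult (n d : nat) (s : simplex n d) (S : {ffun 'I_(n-1) -> nat}) : nat :=
  \prod_i 'C(s i, S i).

Definition balanced_deg (R : comNzRingType) (n d : nat) (W : {ffun simplex n d -> R})
  (j : nat) : Prop :=
  forall S : {ffun 'I_(n-1) -> nat}, \sum_i S i = j ->
    (\sum_(s in supp W) (cmult s S)%:R * W s)%R = 0%R.

Definition balanced (R : comNzRingType) (n d : nat) (W : {ffun simplex n d -> R}) : Prop :=
  forall j, j < d -> balanced_deg W j.

Definition aI (n d : nat) (Delta : {set simplex n d}) (I : {set 'I_(n-1)}) : nat :=
  \max_(s in Delta) \sum_(i in I) (s i : nat).

(* F_{(Delta,w)} = (prod_I x_I^{a_I}) * sum_s w_s y_s / z_s, computed in P:
   y_s / z_s = y^s * prod_I x_I^{-(sum_{i in I} mult_i s)}. *)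
Definition Fcx (R : comNzRingType) (n d : nat) (W : {ffun simplex n d -> R}) : P R n :=
  (\sum_(s in supp W)
     mconst (nvars n) (W s) * (\prod_i yv R i ^+ s i)
     * \prod_(I <- SI n) xv R I ^+ (aI (supp W) I - \sum_(i in I) (s i : nat)))%R.

Definition DDelta (n d : nat) (Delta : {set simplex n d}) : Pic n :=
  (Posz d, fun I => (- (Posz d - Posz (aI Delta I)))%R).

From HB Require Import structures.
From mathcomp Require Import all_boot all_order all_algebra.
From mathcomp Require Import zify ring.
Import Order.TTheory GRing.Theory Num.Theory.
Set Implicit Arguments. Unset Strict Implicit. Unset Printing Implicit Defensive.
Local Open Scope ring_scope.

(* For a weighted (d-1)-complex W put Z = prod_I x_I, z'_i = prod_(I not containing i) x_I,
   h_i = y_i z'_i and G_W = sum_s w_s h^s.  Clearing denominators gives the basic identity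
   Z^d F_W = x^a G_W (a = (a_I)_I), and everything reduces to it:
   1. Monomials.  F_W is a sum of monomials with pairwise distinct exponents, one for each
      simplex s, with coefficient w_s.  Hence W -> F_W is injective, F_W <> 0, and F_W is
      homogeneous of class D_Delta.
   2. Multinomial expansion.  sum_s w_s prod_i (a_i + b)^(s_i) = sum_S B_S a^S b^(d - |S|)
      with B_S = sum_s c(s,S) w_s; balancedness says exactly that B_S = 0 for |S| < d.
   3. Forward direction.  With a_i = h_i, b = -h_i0 this shows that z_i0^d F_W is a
      polynomial in the generators v_(i0,i) and x_I, so F_W lies in the Cox ring; a simplex
      maximizing sum_(i in I) s_i gives a monomial of F_W free of x_I.
   4. Balancedness.  The substitution tau : y_i -> y_i + t z_i fixes the Cox ring; applied
      to G_W and expanded by 2, the coefficient of t^(d-j) is Z^(d-j) sum_(|S| = j) B_S h^S,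
      so Cox membership of F_W forces B_S = 0 for |S| < d.
   5. Surjectivity.  For f homogeneous of degree d the x_I-exponents of a monomial are
      determined by its y-part s; reading off coefficients gives W with F_W = f, where
      non-divisibility by the x_I pins down a_I. *)

Section IteratedPolynomials.
Variable R : comNzRingType.

Lemma mcoef0 k e : mcoef (0 : mpoly R k) e = 0.
Proof. by elim: k => [|k IH] //=; rewrite coef0 IH. Qed.

Lemma mcoefD k (p q : mpoly R k) e : mcoef (p + q) e = mcoef p e + mcoef q e.
Proof. by elim: k p q => [|k IH] p q //=; rewrite coefD IH. Qed.

Lemma mcoef_sum k (I : Type) (r : seq I) (Pr : pred I) (F : I -> mpoly R k) e :
  mcoef (\sum_(i <- r | Pr i) F i) e = \sum_(i <- r | Pr i) mcoef (F i) e.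
Proof. by apply: (big_morph (fun p => mcoef p e)); [move=> ? ?; exact: mcoefD | exact: mcoef0]. Qed.

Lemma mcoef_agree k (p : mpoly R k) e e' :
  (forall i, (i < k)%N -> e i = e' i) -> mcoef p e = mcoef p e'.
Proof.
elim: k p => [|k IH] p eq_e //=.
by rewrite eq_e // IH // => i lt_ik; apply: eq_e; exact: ltnW.
Qed.

Definition upd (e : nat -> nat) (k j : nat) : nat -> nat :=
  fun i => if i == k then j else e i.

Lemma mcoef_upd k (p : {poly mpoly R k}) e j :
  mcoef (p : mpoly R k.+1) (upd e k j) = mcoef p`_j e.
Proof.
rewrite /= /upd eqxx; apply: mcoef_agree => i lt_ik; by rewrite (ltn_eqF lt_ik).
Qed.

Lemma mpoly_ext k (p q : mpoly R k) :
  (forall e, mcoef p e = mcoef q e) -> p = q.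
Proof.
elim: k p q => [|k IH] p q eq_pq; first exact: (eq_pq (fun _ => 0%N)).
by apply/polyP => j; apply: IH => e; rewrite -!mcoef_upd eq_pq.
Qed.

Lemma mcoef_neq0 k (p : mpoly R k) : p != 0 -> exists e, mcoef p e != 0.
Proof.
elim: k p => [|k IH] p p_nz; first by exists (fun _ => 0%N).
have /IH [e e_nz] : (p : {poly mpoly R k})`_(size p).-1 != 0.
  by rewrite -lead_coefE lead_coef_eq0.
by exists (upd e k (size p).-1); rewrite mcoef_upd.
Qed.

Fixpoint mconstM k : {rmorphism R -> mpoly R k} :=
  match k with 0 => idfun | k.+1 => (polyC \o mconstM k)%FUN end.

Lemma mconstME k c : mconstM k c = mconst k c.
Proof. by elim: k => [|k IH] //=; rewrite IH. Qed.

End IteratedPolynomials.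

Lemma ltS_neq i k : (i < k.+1)%N -> i <> k -> (i < k)%N.
Proof. by move=> lt_ik /eqP ne; rewrite ltn_neqAle ne -ltnS. Qed.

Section Monomials.
Variable R : comNzRingType.

Definition mono k (f : nat -> nat) : mpoly R k := \prod_(j < k) mvar R k j ^+ f j.

Lemma monoS k f : mono k.+1 f = (mono k f)%:P * 'X^(f k).
Proof.
rewrite /mono big_ord_recr /= eqxx rmorph_prod; congr (_ * _).
by apply: eq_bigr => j _; rewrite (ltn_eqF (ltn_ord j)) rmorphXn.
Qed.

Lemma mcoef_mono k c f e :
  mcoef (mconst k c * mono k f) e =
  if all (fun j => e j == f j) (iota 0 k) then c else 0.
Proof.
elim: k => [|k IH]; first by rewrite /mono big_ord0 /= mulr1.
have -> : iota 0 k.+1 = iota 0 k ++ [:: k] by rewrite -addn1 iotaD.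
rewrite all_cat /= andbT monoS /= mulrA -rmorphM mul_polyC.
by rewrite coefZ coefXn; case: (e k == f k); rewrite ?mulr1 ?mulr0 ?mcoef0 ?IH ?andbF ?andbT.
Qed.

Lemma mvar_lreg k i : (i < k)%N -> GRing.lreg (mvar R k i).
Proof.
elim: k => [|k IH] //= lt_ik.
case: eqP => [_|ne]; first exact/monic_lreg/monicX.
by apply/lreg_lead; rewrite lead_coefC; apply/IH/ltS_neq.
Qed.

Lemma mcoef_mvarM0 k i (g : mpoly R k) e :
  (i < k)%N -> e i = 0%N -> mcoef (mvar R k i * g) e = 0.
Proof.
elim: k g => [|k IH] //= g lt_ik ei0.
case: eqP => [eq_ik|ne]; first by rewrite eq_ik in ei0; rewrite coefXM ei0 /= mcoef0.
by rewrite coefCM IH //; exact: ltS_neq.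
Qed.

Lemma mvar_dvd k i (p : mpoly R k) :
  (i < k)%N -> (forall e, mcoef p e != 0 -> (0 < e i)%N) ->
  exists g, p = mvar R k i * g.
Proof.
elim: k p => [|k IH] //= p lt_ik supp_p.
case: eqP => [eq_ik|ne].
  have p0 : p`_0 = 0.
    apply: mpoly_ext => e; rewrite mcoef0 -(mcoef_upd p).
    case: (mcoef (p : mpoly R k.+1) (upd e k 0) =P 0) => // /eqP /supp_p.
    by rewrite /upd eq_ik eqxx.
  exists (\poly_(j < size p) p`_j.+1); apply/polyP => [[|j]]; rewrite coefXM //=.
  by rewrite coef_poly; case: ltnP => // le; rewrite nth_default // (leq_trans le).
have lt_ik' := ltS_neq lt_ik ne.
have dvd_coef j : exists g, p`_j == mvar R k i * g.
  have [g ->] : exists g, p`_j = mvar R k i * g; last by exists g.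
  apply: IH => // e; rewrite -mcoef_upd => /supp_p.
  by rewrite /upd (negbTE (introN eqP ne)).
exists (\poly_(j < size p) xchoose (dvd_coef j)); apply/polyP => j.
rewrite coefCM coef_poly; case: ltnP => le.
  exact/eqP/(xchooseP (dvd_coef j)).
by rewrite mulr0 nth_default.
Qed.

Variables (A : comNzRingType) (iota : {rmorphism R -> A}) (v : nat -> A).

Fixpoint meval (k : nat) : {rmorphism mpoly R k -> A} :=
  match k return {rmorphism mpoly R k -> A} with
  | 0 => iota
  | k'.+1 => (horner_morph (fun a => mulrC (v k') (meval k' a))
               : {rmorphism {poly mpoly R k'} -> A})
  end.

Lemma meval_var k i : (i < k)%N -> meval k (mvar R k i) = v i.
Proof.
elim: k => [|k IH] //= lt_ik.
case: eqP => [->|ne]; first by rewrite horner_morphX.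
by rewrite horner_morphC IH //; exact: ltS_neq.
Qed.

Lemma meval_const k c : meval k (mconst k c) = iota c.
Proof. by elim: k => [|k IH] //=; rewrite horner_morphC IH. Qed.

End Monomials.

Section MonomialsOfP.
Variables (R : comNzRingType) (n : nat).
Local Notation m := (n - 1)%N.

Lemma SI_uniq : uniq (SI n).
Proof. by rewrite /SI filter_uniq // enum_uniq. Qed.

Lemma mem_SI I : (I \in SI n) = validI I.
Proof. by rewrite /SI mem_filter mem_enum andbT. Qed.

Lemma xidx_nth t : (t < size (SI n))%N -> xidx (nth set0 (SI n) t) = (m + t)%N.
Proof. by move=> lt_t; rewrite /xidx index_uniq // SI_uniq. Qed.

Lemma xidx_lt (I : {set 'I_m}) : I \in SI n -> (xidx I < nvars n)%N.
Proof. by move=> IS; rewrite /xidx /nvars ltn_add2l index_mem. Qed.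

Lemma insub_xidx (I : {set 'I_m}) : (insub (xidx I) : option 'I_m) = None.
Proof. by apply: insubF; rewrite /xidx ltnNge leq_addr. Qed.

Definition Mm (s : 'I_m -> nat) (g : {set 'I_m} -> nat) : P R n :=
  \prod_i yv R i ^+ s i * \prod_(I <- SI n) xv R I ^+ g I.

Definition expf (s : 'I_m -> nat) (g : {set 'I_m} -> nat) : nat -> nat :=
  fun j => if (insub j : option 'I_m) is Some i then s i
           else g (nth set0 (SI n) (j - m)).

Lemma expf_y s g (i : 'I_m) : expf s g i = s i.
Proof. by rewrite /expf valK. Qed.

Lemma expf_x s g (I : {set 'I_m}) : I \in SI n -> expf s g (xidx I) = g I.
Proof. by move=> IS; rewrite /expf insub_xidx /xidx addKn nth_index. Qed.

Lemma Mm_mono s g : Mm s g = mono R (nvars n) (expf s g).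
Proof.
rewrite /mono /nvars big_split_ord /=; congr (_ * _).
  by apply: eq_bigr => i _; rewrite /expf /= valK.
rewrite (big_nth set0) big_mkord; apply: eq_bigr => t _.
by rewrite /xv xidx_nth // -(xidx_nth (ltn_ord t)) expf_x // mem_nth.
Qed.

Definition Mmatch (e : nat -> nat) (s : 'I_m -> nat) (g : {set 'I_m} -> nat) : bool :=
  [forall i : 'I_m, e i == s i] && all (fun I => e (xidx I) == g I) (SI n).

Lemma Mmatch_expf s g : Mmatch (expf s g) s g.
Proof.
apply/andP; split; first by apply/forallP => i; rewrite expf_y.
by apply/allP => I IS; rewrite expf_x.
Qed.

Lemma Mmatch_y e s g : Mmatch e s g -> forall i : 'I_m, e i = s i.
Proof. by case/andP => /forallP eq_y _ i; apply/eqP. Qed.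

Lemma Mmatch_x e s g (I : {set 'I_m}) : Mmatch e s g -> I \in SI n -> e (xidx I) = g I.
Proof. by case/andP => _ /allP eq_x IS; apply/eqP/eq_x. Qed.

Lemma Mmatch_eq e s g j :
  Mmatch e s g -> (j < nvars n)%N -> e j = expf s g j.
Proof.
move=> M lt_j; case: (ltnP j m) => lt_jm.
  by rewrite -[j]/(nat_of_ord (Ordinal lt_jm)) expf_y (Mmatch_y M).
have lt_t : (j - m < size (SI n))%N by rewrite ltn_subLR.
have := xidx_nth lt_t; rewrite subnKC // => <-.
by rewrite expf_x ?mem_nth // (Mmatch_x M) ?mem_nth.
Qed.

Lemma Mmatch_congr e s g g' :
  (forall I, I \in SI n -> g I = g' I) -> Mmatch e s g = Mmatch e s g'.
Proof. by move=> eq_g; congr (_ && _); apply: eq_in_all => I /eq_g ->. Qed.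

Lemma mcoef_Mm c s g e :
  mcoef (mconst (nvars n) c * Mm s g) e = if Mmatch e s g then c else 0.
Proof.
rewrite Mm_mono mcoef_mono; congr (if _ then _ else _).
apply/allP/idP => [eq_e|M j]; last first.
  by rewrite mem_iota => /andP [_ lt_j]; apply/eqP/Mmatch_eq.
apply/andP; split.
  apply/forallP => i; rewrite -(expf_y s g i); apply: eq_e.
  by rewrite mem_iota add0n /nvars ltn_addr.
apply/allP => I IS; rewrite -(expf_x s g IS); apply: eq_e.
by rewrite mem_iota add0n xidx_lt.
Qed.

End MonomialsOfP.

Lemma sumPosz (I : finType) (Pr : pred I) (F : I -> nat) :
  \sum_(i | Pr i) (Posz (F i)) = Posz (\sum_(i | Pr i) F i)%N.
Proof. by rewrite -natz natr_sum; apply: eq_bigr => i _; rewrite natz. Qed.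

Lemma sum_split (T : finType) (I : {pred T}) (F : T -> nat) :
  (\sum_i F i = \sum_(i in I) F i + \sum_(i | i \notin I) F i)%N.
Proof. by rewrite (bigID (mem I)). Qed.

Section MonomialsOfF.
Variables (R : comNzRingType) (n d : nat).
Local Notation m := (n - 1)%N.
Implicit Types (W : {ffun simplex n d -> R}) (s : simplex n d).

Definition sv s : 'I_m -> nat := fun i => s i.
Definition gW W s (I : {set 'I_m}) : nat := (aI (supp W) I - \sum_(i in I) (s i : nat))%N.

(* a_I bounds the I-degree of every simplex of the support, so the x-exponents
   of F_W are natural numbers. *)
Lemma aI_ge W s (I : {set 'I_m}) :
  s \in supp W -> (\sum_(i in I) (s i : nat) <= aI (supp W) I)%N.
Proof. by move=> sS; apply: leq_bigmax_cond. Qed.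

Lemma Fcx_Mm W : Fcx W = \sum_(s in supp W) mconst (nvars n) (W s) * Mm R (sv s) (gW W s).
Proof. by apply: eq_bigr => s _; rewrite /Mm mulrA. Qed.

(* Distinct simplices give distinct monomials: the y-exponents are s itself. *)
Lemma Mmatch_simplex e s s' g g' :
  Mmatch e (sv s) g -> Mmatch e (sv s') g' -> s = s'.
Proof.
move=> M M'; apply/ffunP => i; apply: val_inj.
exact: etrans (esym (Mmatch_y M i)) (Mmatch_y M' i).
Qed.

Lemma mcoef_Fcx W e :
  mcoef (Fcx W) e = \sum_(s in supp W) if Mmatch e (sv s) (gW W s) then W s else 0.
Proof. by rewrite Fcx_Mm mcoef_sum; apply: eq_bigr => s _; exact: mcoef_Mm. Qed.

Lemma mcoef_Fcx_at W e s :
  s \in supp W -> Mmatch e (sv s) (gW W s) -> mcoef (Fcx W) e = W s.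
Proof.
move=> sS M; rewrite mcoef_Fcx (bigD1 s) //= M big1 ?addr0 // => s' /andP [_ ne].
by case: ifP => // M'; rewrite (Mmatch_simplex M' M) eqxx in ne.
Qed.

Lemma mcoef_Fcx_neq0 W e :
  mcoef (Fcx W) e != 0 -> exists2 s, s \in supp W & Mmatch e (sv s) (gW W s).
Proof.
rewrite mcoef_Fcx; case: (boolP [exists s in supp W, Mmatch e (sv s) (gW W s)]).
  by case/existsP => s /andP [sS M]; exists s.
move/existsPn => noM; rewrite big1 ?eqxx // => s sS.
by have := noM s; rewrite sS /= => /negbTE ->.
Qed.

Lemma mcoef_Fcx_expf W s : mcoef (Fcx W) (expf (sv s) (gW W s)) = W s.
Proof.
case: (boolP (s \in supp W)) => [sS|].
  by apply: mcoef_Fcx_at => //; exact: Mmatch_expf.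
rewrite inE negbK => /eqP Ws0; rewrite Ws0; apply/eqP/contraT.
case/mcoef_Fcx_neq0 => s' s'S /Mmatch_simplex /(_ (Mmatch_expf _ _)) eq_s.
by rewrite eq_s inE Ws0 eqxx in s'S.
Qed.

Lemma Fcx_inj W1 W2 : Fcx W1 = Fcx W2 -> W1 = W2.
Proof.
move=> eq_F; apply/ffunP => s.
wlog sS : W1 W2 eq_F / s \in supp W1.
  move=> H; case S1: (s \in supp W1); first exact: H.
  case S2: (s \in supp W2); first by symmetry; apply: H.
  by move: S1 S2; rewrite !inE => /negbFE/eqP -> /negbFE/eqP ->.
have : mcoef (Fcx W2) (expf (sv s) (gW W1 s)) != 0.
  by rewrite -eq_F mcoef_Fcx_expf; rewrite inE in sS.
case/mcoef_Fcx_neq0 => s' s'S M.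
have eq_s := Mmatch_simplex M (Mmatch_expf _ _); subst s'.
by rewrite -(mcoef_Fcx_expf W1 s) eq_F (mcoef_Fcx_at s'S M).
Qed.

(* Each monomial of F_W has class D_Delta: its H-degree is |s| = d and the
   coefficient of E_I is (a_I - sum_(i in I) s_i) - sum_(i notin I) s_i = a_I - d. *)
Lemma Fcx_homog (Delta : {set simplex n d}) W :
  is_complex Delta -> supp W = Delta -> homog_of (Fcx W) (DDelta Delta).
Proof.
move=> cD sW e /mcoef_Fcx_neq0 [s sS M].
have size_s : (\sum_i (s i : nat))%N = d by apply: cD; rewrite -sW.
have ey (i : 'I_m) : Posz (e i) = Posz (s i) by rewrite (Mmatch_y M).
rewrite /mono_class /DDelta (eq_bigr _ (fun i _ => ey i)) sumPosz size_s.
split => // I vI /=.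
rewrite (Mmatch_x M) ?mem_SI // (eq_bigr _ (fun i _ => ey i)) sumPosz /gW sW.
have le_a := aI_ge I sS; rewrite sW in le_a.
have := sum_split I (fun i => (s i : nat)); rewrite size_s.
move: le_a; set a := aI _ I; set sI := (\sum_(i in I) _)%N.
by set sIc := (\sum_(i | _) _)%N; lia.
Qed.

End MonomialsOfF.

Section ClearingDenominators.
Variables (R : comNzRingType) (n : nat).
Local Notation m := (n - 1)%N.

Definition Zall : P R n := \prod_(I <- SI n) xv R I.
Definition zco (i : 'I_m) : P R n := \prod_(I <- SI n | i \notin I) xv R I.
Definition xpow (a : {set 'I_m} -> nat) : P R n := \prod_(I <- SI n) xv R I ^+ a I.

Lemma zv_zco i : zv R i * zco i = Zall.
Proof.
rewrite /zv /zco /Zall big_mkcond [X in _ * X]big_mkcond -big_split.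
by apply: eq_bigr => I _ /=; case: (i \in I); rewrite ?mulr1 ?mul1r.
Qed.

Lemma prod_zco (s : 'I_m -> nat) :
  \prod_i zco i ^+ s i = xpow (fun I => \sum_(i | i \notin I) s i)%N.
Proof.
transitivity (\prod_i \prod_(I <- SI n) (if i \notin I then xv R I ^+ s i else 1)).
  by apply: eq_bigr => i _; rewrite /zco -prodrXl big_mkcond.
rewrite exchange_big /xpow; apply: eq_bigr => I _.
by rewrite -prodrXr [RHS]big_mkcond /=; apply: eq_bigr => i _; case: ifP.
Qed.

Lemma zv_pow i0 k : zv R i0 ^+ k = xpow (fun I => if i0 \in I then k else 0%N).
Proof.
rewrite /zv -prodrXl /xpow big_mkcond.
by apply: eq_bigr => I _; case: ifP; rewrite ?expr0.
Qed.

Lemma xpow_shift a I : I \in SI n ->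
  xpow (fun J => a J + (J == I))%N = xpow a * xv R I.
Proof.
move=> IS; rewrite /xpow; under eq_bigr => J _ do rewrite exprD.
rewrite big_split /=; congr (_ * _).
rewrite (bigD1_seq I) //= ?SI_uniq // eqxx expr1 big1 ?mulr1 // => J /negbTE ->.
by rewrite expr0.
Qed.

Lemma clear_denominators (u : 'I_m -> P R n) d (s : 'I_m -> nat) (a : {set 'I_m} -> nat) :
  (\sum_i s i)%N = d -> (forall I : {set 'I_m}, \sum_(i in I) s i <= a I)%N ->
  Zall ^+ d * (\prod_i u i ^+ s i * \prod_(I <- SI n) xv R I ^+ (a I - \sum_(i in I) s i)%N)
  = xpow a * \prod_i (u i * zco i) ^+ s i.
Proof.
move=> size_s le_a.
under [in RHS]eq_bigr => i _ do rewrite exprMn.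
rewrite big_split /= prod_zco /Zall -prodrXl /xpow mulrCA [RHS]mulrCA; congr (_ * _).
rewrite -!big_split /=; apply: eq_bigr => I _; rewrite -!exprD; congr (_ ^+ _).
have := sum_split I s; rewrite size_s; move: (le_a I).
by set sI := (\sum_(i in I) _)%N; set sIc := (\sum_(i | _) _)%N; lia.
Qed.

Lemma xv_lreg I : I \in SI n -> GRing.lreg (xv R I).
Proof. by move=> IS; apply/mvar_lreg/xidx_lt. Qed.

Lemma Zall_lreg : GRing.lreg Zall.
Proof.
rewrite /Zall big_seq; apply: big_ind => //; [exact: lreg1 | exact: lregM | exact: xv_lreg].
Qed.

Lemma xpow_lreg a : GRing.lreg (xpow a).
Proof.
rewrite /xpow big_seq; apply: big_ind => //; [exact: lreg1 | exact: lregM | ].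
by move=> I IS; apply/lregX/xv_lreg.
Qed.

End ClearingDenominators.

Section GeneratedSubalgebra.
Variables (R : comNzRingType) (n : nat).

Lemma gen_alg0 : gen_alg (0 : P R n).
Proof. by rewrite -(rmorph0 (mconstM R (nvars n))) mconstME; apply: ga_const. Qed.

Lemma gen_alg1 : gen_alg (1 : P R n).
Proof. by rewrite -(rmorph1 (mconstM R (nvars n))) mconstME; apply: ga_const. Qed.

Lemma gen_alg_sum (T : Type) (r : seq T) (Pr : pred T) (F : T -> P R n) :
  (forall i, Pr i -> gen_alg (F i)) -> gen_alg (\sum_(i <- r | Pr i) F i).
Proof. by move=> H; apply: big_ind => //; [exact: gen_alg0 | exact: ga_add]. Qed.

Lemma gen_alg_prod (T : Type) (r : seq T) (Pr : pred T) (F : T -> P R n) :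
  (forall i, Pr i -> gen_alg (F i)) -> gen_alg (\prod_(i <- r | Pr i) F i).
Proof. by move=> H; apply: big_ind => //; [exact: gen_alg1 | exact: ga_mul]. Qed.

Lemma gen_alg_exp (f : P R n) k : gen_alg f -> gen_alg (f ^+ k).
Proof.
by move=> H; elim: k => [|k IH]; [exact: gen_alg1 | rewrite exprS; exact: ga_mul].
Qed.

End GeneratedSubalgebra.

Section MultinomialExpansion.
Variables (R : comNzRingType) (n d : nat).
Variables (A : comNzRingType) (iota : {rmorphism R -> A}).
Local Notation m := (n - 1)%N.
Implicit Types (W : {ffun simplex n d -> R}) (s S : simplex n d).

Definition toN S : {ffun 'I_m -> nat} := [ffun i => (S i : nat)].

Definition bcoef W S : R := \sum_(s in supp W) (cmult s (toN S))%:R * W s.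

Lemma exprD_widen (x y : A) k : (k <= d)%N ->
  (x + y) ^+ k = \sum_(j < d.+1) ('C(k, j))%:R * x ^+ j * y ^+ (k - j).
Proof.
move=> le_kd; rewrite addrC exprDn.
rewrite (big_ord_widen d.+1 (fun i => y ^+ (k - i) * x ^+ i *+ 'C(k, i))) // big_mkcond.
apply: eq_bigr => j _; case: ltnP => lt_jk; first by rewrite -mulr_natl; ring.
by rewrite bin_small // !mul0r.
Qed.

Lemma multinomial (a : 'I_m -> A) (b : A) s :
  \prod_i (a i + b) ^+ s i =
  \sum_S (cmult s (toN S))%:R * \prod_i a i ^+ S i * b ^+ (mult_size s - mult_size S).
Proof.
rewrite (eq_bigr (fun i => \sum_(j < d.+1) ('C(s i, j))%:R * a i ^+ j * b ^+ (s i - j)));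
  last by move=> i _; apply: exprD_widen; rewrite -ltnS ltn_ord.
rewrite bigA_distr_bigA /=; apply: eq_bigr => S _.
rewrite !big_split /= -natr_prod prodrXr.
have -> : cmult s (toN S) = (\prod_i 'C(s i, S i))%N.
  by apply: eq_bigr => i _; rewrite ffunE.
have [/forallP le_Ss | /forallPn [i]] := boolP [forall i, (S i <= s i)%N].
  by rewrite /mult_size sumnB.
rewrite -ltnNge => lt_si; rewrite (bigD1 i) //= bin_small // mul0n.
by rewrite !mul0r.
Qed.

Lemma expand_shift W (a : 'I_m -> A) (b : A) : is_wcomplex W ->
  \sum_(s in supp W) iota (W s) * \prod_i (a i + b) ^+ s i =
  \sum_S iota (bcoef W S) * \prod_i a i ^+ S i * b ^+ (d - mult_size S).
Proof.
move=> cW.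
transitivity (\sum_(s in supp W) \sum_S
   iota ((cmult s (toN S))%:R * W s) * \prod_i a i ^+ S i * b ^+ (d - mult_size S)).
  apply: eq_bigr => s sS; rewrite multinomial (cW s sS) mulr_sumr.
  apply: eq_bigr => S _.
  by rewrite rmorphM rmorph_nat !mulrA [iota (W s) * _]mulrC.
by rewrite exchange_big /=; apply: eq_bigr => S _; rewrite /bcoef rmorph_sum !mulr_suml.
Qed.

Lemma bcoef_low W S : balanced W -> (mult_size S < d)%N -> bcoef W S = 0.
Proof.
move=> bW lt_Sd; apply: (bW _ lt_Sd).
by rewrite /mult_size; apply: eq_bigr => i _; rewrite ffunE.
Qed.

Lemma cmult_top s S :
  mult_size s = d -> (d <= mult_size S)%N -> cmult s (toN S) = (s == S).
Proof.
move=> size_s le_dS; have [<-|ne] := eqVneq s S.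
  by apply: big1 => i _; rewrite ffunE binn.
have [/existsP [i lt_si] | /existsPn le_Ss] := boolP [exists i, (s i < S i)%N].
  by rewrite /cmult (bigD1 i) //= ffunE bin_small ?mul0n.
case/eqP: ne; apply/ffunP => i; apply: val_inj.
have le_i j : (S j <= s j)%N by rewrite leqNgt le_Ss.
have : (\sum_i (s i - S i) == 0)%N.
  by rewrite sumnB // -/(mult_size s) -/(mult_size S) size_s subn_eq0.
rewrite sum_nat_eq0 => /forallP /(_ i) /implyP /(_ isT); rewrite subn_eq0 => le_si.
by apply/eqP; rewrite eqn_leq le_si le_i.
Qed.

Lemma bcoef_top W S : is_wcomplex W -> (d <= mult_size S)%N -> bcoef W S = W S.
Proof.
move=> cW le_dS.
have cmultE s : s \in supp W -> cmult s (toN S) = (s == S).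
  by move=> sS; exact: cmult_top (cW s sS) le_dS.
case: (boolP (S \in supp W)) => SS.
  rewrite /bcoef (bigD1 S) //= big1 ?addr0; first by rewrite cmultE // eqxx mul1r.
  by move=> s /andP [sS ne]; rewrite cmultE // (negbTE ne) mul0r.
rewrite /bcoef big1 => [|s sS]; first by move: SS; rewrite inE negbK => /eqP ->.
by rewrite cmultE //; case: eqP => [eq_s|]; [move: SS; rewrite -eq_s sS | rewrite mul0r].
Qed.

Lemma expand_shift_balanced W (a : 'I_m -> A) (b : A) :
  is_wcomplex W -> balanced W ->
  \sum_(s in supp W) iota (W s) * \prod_i (a i + b) ^+ s i =
  \sum_(s in supp W) iota (W s) * \prod_i a i ^+ s i.
Proof.
move=> cW bW; rewrite expand_shift // [RHS]big_mkcond; apply: eq_bigr => S _ /=.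
case: (ltnP (mult_size S) d) => [lt_Sd | le_dS].
  rewrite bcoef_low // rmorph0 !mul0r; case: ifP => // SS.
  by move: lt_Sd; rewrite (cW S SS) ltnn.
rewrite bcoef_top // (_ : d - mult_size S = 0)%N ?expr0 ?mulr1; last exact/eqP.
by case: ifP => // /negbT; rewrite inE negbK => /eqP ->; rewrite rmorph0 mul0r.
Qed.

End MultinomialExpansion.

Section ClearedForm.
Variables (R : comNzRingType) (n d : nat).
Local Notation m := (n - 1)%N.
Implicit Types (W : {ffun simplex n d -> R}).

Definition Fsub W (u : 'I_m -> P R n) : P R n :=
  \sum_(s in supp W) mconst (nvars n) (W s) *
    (\prod_i u i ^+ s i * \prod_(I <- SI n) xv R I ^+ (aI (supp W) I - \sum_(i in I) (s i : nat))%N).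

Lemma Fsub_y W : Fsub W (@yv R n) = Fcx W.
Proof. by apply: eq_bigr => s _; rewrite mulrA. Qed.

Lemma Zall_Fsub W u : is_wcomplex W ->
  Zall R n ^+ d * Fsub W u =
  xpow R (aI (supp W)) * \sum_(s in supp W) mconst (nvars n) (W s) * \prod_i (u i * zco R i) ^+ s i.
Proof.
move=> cW; rewrite !mulr_sumr; apply: eq_bigr => s sS.
rewrite mulrCA clear_denominators; first by rewrite mulrCA.
  exact: cW.
by move=> I; exact: aI_ge.
Qed.

Definition hvar (i : 'I_m) : P R n := yv R i * zco R i.

Definition Gcl W : P R n := \sum_(s in supp W) mconst (nvars n) (W s) * \prod_i hvar i ^+ s i.

Lemma Zall_Fcx W : is_wcomplex W -> Zall R n ^+ d * Fcx W = xpow R (aI (supp W)) * Gcl W.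
Proof. by move=> cW; rewrite -Fsub_y Zall_Fsub. Qed.

Definition vgen (i0 i : 'I_m) : P R n := yv R i * zv R i0 - yv R i0 * zv R i.

Lemma vgen_zco i0 i : vgen i0 i * zco R i = zv R i0 * (hvar i - hvar i0).
Proof.
have -> : zv R i0 * (hvar i - hvar i0) =
          zv R i0 * yv R i * zco R i - yv R i0 * (zv R i0 * zco R i0) by rewrite /hvar; ring.
by rewrite zv_zco -(zv_zco R i) /vgen; ring.
Qed.

(* Key identity: for balanced W, substituting v_(i0,i) for y_i in F_W gives
   z_i0^d F_W; the shift h_i -> h_i - h_i0 is invisible by balancedness. *)
Lemma Fsub_vgen i0 W : is_wcomplex W -> balanced W ->
  Fsub W (vgen i0) = zv R i0 ^+ d * Fcx W.
Proof.
move=> cW bW; have Zd_lreg := @lregX _ _ d (@Zall_lreg R n); apply: Zd_lreg.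
rewrite Zall_Fsub // mulrCA Zall_Fcx // mulrCA; congr (_ * _).
transitivity (zv R i0 ^+ d * \sum_(s in supp W)
    mconstM R (nvars n) (W s) * \prod_i (hvar i + - hvar i0) ^+ s i).
  rewrite mulr_sumr; apply: eq_bigr => s sS; rewrite mconstME mulrCA; congr (_ * _).
  under eq_bigr => i _ do rewrite vgen_zco exprMn.
  by rewrite big_split /= prodrXr -/(mult_size s) (cW s sS).
rewrite expand_shift_balanced //; congr (_ * _).
by apply: eq_bigr => s _; rewrite mconstME.
Qed.

Lemma gen_alg_Fsub_vgen i0 W : gen_alg (Fsub W (vgen i0)).
Proof.
apply: gen_alg_sum => s _; apply: ga_mul; first exact: ga_const.
apply: ga_mul; first by apply: gen_alg_prod => i _; apply/gen_alg_exp/ga_v.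
rewrite big_seq; apply: gen_alg_prod => I IS; apply/gen_alg_exp/ga_x.
by rewrite -mem_SI.
Qed.

End ClearedForm.

Section ForwardDirection.
Variables (R : comNzRingType) (n d : nat).
Local Notation m := (n - 1)%N.
Implicit Types (W : {ffun simplex n d -> R}).

(* F_W lies in the Cox ring: z_i0^d is the monomial x^a with a_I = d [i0 in I],
   and z_i0^d F_W is a polynomial in the generators (i0 exists since n >= 2). *)
Lemma Fcx_inCox W : (1 < n)%N -> is_wcomplex W -> balanced W -> inCox (Fcx W).
Proof.
move=> lt1n cW bW; have lt0m : (0 < m)%N by rewrite subn_gt0.
pose i0 := Ordinal lt0m; exists (fun I : {set 'I_m} => if i0 \in I then d else 0%N).
rewrite -[X in gen_alg (X * _)]/(xpow R _) -zv_pow -Fsub_vgen //.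
exact: gen_alg_Fsub_vgen.
Qed.

Lemma Fcx_neq0 W : supp W != set0 -> Fcx W != 0.
Proof.
case/set0Pn => s sS; apply: contraTneq sS => F0.
by rewrite inE negbK -(mcoef_Fcx_expf W s) F0 mcoef0.
Qed.

(* x_I does not divide F_W: a simplex s maximizing sum_(i in I) s_i
   contributes a monomial of F_W free of x_I. *)
Lemma Fcx_not_divCox W I : supp W != set0 -> validI I -> ~ divCox I (Fcx W).
Proof.
move=> nW vI [g _ eq_F].
have pos : (0 < #|supp W|)%N by rewrite card_gt0.
have [s sS a_eq] := eq_bigmax_cond (fun s : simplex n d => \sum_(i in I) (s i : nat))%N pos.
move: sS; rewrite inE -(mcoef_Fcx_expf W s) eq_F; apply/negP; rewrite negbK.
apply/eqP/mcoef_mvarM0; first by apply: xidx_lt; rewrite mem_SI.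
by rewrite expf_x ?mem_SI // /gW /aI a_eq subnn.
Qed.

End ForwardDirection.

Section Substitution.
Variables (R : comNzRingType) (n d : nat).
Local Notation m := (n - 1)%N.
Local Notation PP := {poly P R n}.
Implicit Types (W : {ffun simplex n d -> R}) (S : simplex n d).

(* tau : P -> P[t] substitutes y_i + t z_i for y_i and fixes the x_I.  It fixes
   every generator v_(i,j) of the Cox ring, hence (x_I being regular) the whole
   Cox ring. *)
Definition iotaT : {rmorphism R -> PP} := (polyC \o mconstM R (nvars n))%FUN.
Definition tauv (j : nat) : PP :=
  if (insub j : option 'I_m) is Some i then (yv R i)%:P + 'X * (zv R i)%:P
  else (mvar R (nvars n) j)%:P.
Definition tau : {rmorphism P R n -> PP} := meval iotaT tauv (nvars n).

Lemma tau_const c : tau (mconst (nvars n) c) = (mconst (nvars n) c)%:P.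
Proof. by rewrite /tau meval_const /= mconstME. Qed.

Lemma tau_x I : I \in SI n -> tau (xv R I) = (xv R I)%:P.
Proof. by move=> IS; rewrite /tau /xv meval_var ?xidx_lt // /tauv insub_xidx. Qed.

Lemma tau_y i : tau (yv R i) = (yv R i)%:P + 'X * (zv R i)%:P.
Proof.
rewrite /tau /yv meval_var ?/tauv ?valK //.
by rewrite /nvars (leq_trans (ltn_ord i)) // leq_addr.
Qed.

Lemma tau_xprod (Pr : pred {set 'I_m}) (F : {set 'I_m} -> nat) :
  tau (\prod_(I <- SI n | Pr I) xv R I ^+ F I) = (\prod_(I <- SI n | Pr I) xv R I ^+ F I)%:P.
Proof.
rewrite !rmorph_prod big_seq_cond [RHS]big_seq_cond.
by apply: eq_bigr => I /andP [IS _]; rewrite !rmorphXn tau_x.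
Qed.

Lemma tau_xprod1 (Pr : pred {set 'I_m}) :
  tau (\prod_(I <- SI n | Pr I) xv R I) = (\prod_(I <- SI n | Pr I) xv R I)%:P.
Proof.
rewrite (eq_bigr (fun I => xv R I ^+ 1)) => [|I _]; last by rewrite expr1.
exact: tau_xprod.
Qed.

Lemma tau_hvar i : tau (hvar R i) = (hvar R i)%:P + 'X * (Zall R n)%:P.
Proof.
rewrite /hvar rmorphM tau_y [tau (zco R i)]tau_xprod1 -(zv_zco R i) !rmorphM.
by ring.
Qed.

Lemma tau_gen_alg f : gen_alg f -> tau f = f%:P.
Proof.
elim=> {f} [c | I vI | i j | f _ IH | f g _ IHf _ IHg | f g _ IHf _ IHg].
- exact: tau_const.
- by apply: tau_x; rewrite mem_SI.
- by rewrite rmorphB !rmorphM !tau_y ![tau (zv R _)]tau_xprod1 rmorphB !rmorphM; ring.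
- by rewrite !rmorphN IH.
- by rewrite !rmorphD IHf IHg.
- by rewrite !rmorphM IHf IHg.
Qed.

Lemma tau_inCox f : inCox f -> tau f = f%:P.
Proof.
case=> a /tau_gen_alg; rewrite !rmorphM [tau (\prod_(I <- _) _)]tau_xprod.
by apply: lreg_lead; rewrite lead_coefC; exact: xpow_lreg.
Qed.

Definition gh (S : simplex n d) (I : {set 'I_m}) : nat := (\sum_(i | i \notin I) (S i : nat))%N.

Lemma prod_hvar S : \prod_i hvar R i ^+ S i = Mm R (sv S) (gh S).
Proof. by rewrite /hvar; under eq_bigr => i _ do rewrite exprMn; rewrite big_split /= prod_zco. Qed.

(* tau fixes G_W since it fixes F_W, Z and x^a. *)
Lemma tau_Gcl W : is_wcomplex W -> inCox (Fcx W) -> tau (Gcl W) = (Gcl W)%:P.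
Proof.
move=> cW /tau_inCox tau_F.
have : tau (xpow R (aI (supp W)) * Gcl W) = (xpow R (aI (supp W)) * Gcl W)%:P.
  by rewrite -Zall_Fcx // rmorphM rmorphXn [tau (Zall R n)]tau_xprod1 tau_F -rmorphXn -rmorphM.
rewrite rmorphM [tau (xpow R _)]tau_xprod rmorphM.
by apply: lreg_lead; rewrite lead_coefC; exact: xpow_lreg.
Qed.

Lemma Gcl_expansion W : is_wcomplex W -> inCox (Fcx W) ->
  \sum_S iotaT (bcoef W S) * \prod_i (hvar R i)%:P ^+ S i * ('X * (Zall R n)%:P) ^+ (d - mult_size S)
  = (Gcl W)%:P.
Proof.
move=> cW cox; rewrite -expand_shift // -tau_Gcl // rmorph_sum.
apply: eq_bigr => s _; rewrite rmorphM tau_const rmorph_prod.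
congr (_ * _); first by rewrite /iotaT /= mconstME.
by apply: eq_bigr => i _; rewrite rmorphXn tau_hvar.
Qed.

Lemma coef_expansion_term k S (c : R) :
  (iotaT c * \prod_i (hvar R i)%:P ^+ S i * ('X * (Zall R n)%:P) ^+ (d - mult_size S))`_k =
  if k == (d - mult_size S)%N
  then Zall R n ^+ k * (mconst (nvars n) c * Mm R (sv S) (gh S)) else 0.
Proof.
have -> : \prod_i (hvar R i)%:P ^+ S i = (Mm R (sv S) (gh S))%:P.
  by rewrite -prod_hvar rmorph_prod; apply: eq_bigr => i _; rewrite rmorphXn.
rewrite /iotaT /= mconstME exprMn -rmorphXn.
have -> : forall p q r : P R n,
    p%:P * q%:P * ('X ^+ (d - mult_size S) * r%:P) = (p * q * r)%:P * 'X^(d - mult_size S).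
  by move=> p q r; rewrite !rmorphM; ring.
rewrite mul_polyC coefZ coefXn; case: eqP => [->|_]; last by rewrite mulr0.
by rewrite mulr1; ring.
Qed.

Lemma bcoef_combination W k : is_wcomplex W -> inCox (Fcx W) -> k != 0%N ->
  \sum_S (if k == (d - mult_size S)%N
          then mconst (nvars n) (bcoef W S) * Mm R (sv S) (gh S) else 0) = 0.
Proof.
move=> cW cox k_nz.
have := congr1 (fun p : PP => p`_k) (Gcl_expansion cW cox).
rewrite coefC (negbTE k_nz) coef_sum => sum0.
apply: (@lregX _ _ k (@Zall_lreg R n)); rewrite mulr0 mulr_sumr -[RHS]sum0.
by apply: eq_bigr => S _; rewrite coef_expansion_term; case: ifP; rewrite ?mulr0.
Qed.

Lemma simplex_of_multiset (S : {ffun 'I_m -> nat}) :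
  (\sum_i S i <= d)%N -> exists S0 : simplex n d, toN S0 = S.
Proof.
move=> le_Sd; exists [ffun i => inord (S i)]; apply/ffunP => i; rewrite !ffunE inordK //.
by rewrite ltnS (leq_trans _ le_Sd) // (bigD1 i) //= leq_addr.
Qed.

(* Converse: if F_W lies in the Cox ring then W is balanced.  A multiset S of
   size j < d is a simplex, and Z^(d-j) B_S is the coefficient of t^(d-j) at the
   monomial h^S of the expansion of G_W. *)
Lemma balanced_of_inCox W : is_wcomplex W -> inCox (Fcx W) -> balanced W.
Proof.
move=> cW cox j lt_jd S size_S.
have [S0 eq_S0] : exists S0 : simplex n d, toN S0 = S.
  by apply: simplex_of_multiset; rewrite size_S ltnW.
have size_S0 : mult_size S0 = j.
  by rewrite -size_S -eq_S0; apply: eq_bigr => i _; rewrite ffunE.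
suff : bcoef W S0 = 0 by rewrite /bcoef eq_S0.
have k_nz : (d - j)%N != 0%N by rewrite subn_eq0 -ltnNge.
have := congr1 (fun p => mcoef p (expf (sv S0) (gh S0))) (bcoef_combination cW cox k_nz).
rewrite mcoef0 mcoef_sum (bigD1 S0) //= size_S0 eqxx mcoef_Mm Mmatch_expf.
rewrite big1 ?addr0 // => S' ne_S'; case: ifP => _; last exact: mcoef0.
rewrite mcoef_Mm; case: ifP => // M.
by rewrite (Mmatch_simplex M (Mmatch_expf _ _)) eqxx in ne_S'.
Qed.

End Substitution.

Section Surjectivity.
Variables (R : comNzRingType) (n d : nat).
Local Notation m := (n - 1)%N.
Variables (f : P R n) (D : Pic n).
Hypothesis homog_f : homog_of f D.
Hypothesis deg_D : D.1 = Posz d.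

(* Homogeneity of degree d: a monomial of f has y-degree d, and its x_I-exponent
   is D_I + (y-degree outside I), hence is determined by its y-part. *)
Lemma coef_ydeg e : mcoef f e != 0 -> (\sum_(i : 'I_m) e i)%N = d.
Proof. by case/homog_f => + _; rewrite /mono_class /= sumPosz deg_D => -[]. Qed.

Lemma coef_xexp e I : mcoef f e != 0 -> validI I ->
  Posz (e (xidx I)) = D.2 I + Posz (\sum_(i | i \notin I) e i)%N.
Proof.
by case/homog_f => _ + vI => /(_ I vI); rewrite /mono_class /= sumPosz => <-; rewrite subrK.
Qed.

Definition gD (s : simplex n d) (I : {set 'I_m}) : nat :=
  absz (D.2 I + Posz (\sum_(i | i \notin I) (s i : nat))%N)%R.
Definition Wf : {ffun simplex n d -> R} := [ffun s => mcoef f (expf (sv s) (gD s))].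

Lemma coef_simplex e : mcoef f e != 0 ->
  exists s : simplex n d, Mmatch e (sv s) (gD s) /\ Wf s = mcoef f e.
Proof.
move=> nz; have le_e (i : 'I_m) : (e i < d.+1)%N.
  by rewrite ltnS -(coef_ydeg nz) (bigD1 i) //= leq_addr.
pose s : simplex n d := [ffun i : 'I_m => inord (e i)].
have sv_s i : sv s i = e i by rewrite /sv ffunE inordK.
have M : Mmatch e (sv s) (gD s).
  apply/andP; split; first by apply/forallP => i; rewrite sv_s.
  apply/allP => I IS; rewrite /gD (eq_bigr _ (fun i _ => sv_s i)).
  by rewrite -coef_xexp -?mem_SI.
exists s; split => //; rewrite ffunE; symmetry.
by apply: mcoef_agree => j lt_j; exact: Mmatch_eq.
Qed.

Lemma supp_Wf s : Wf s != 0 -> mult_size s = d /\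
  forall I, validI I -> Posz (gD s I) = D.2 I + Posz (\sum_(i | i \notin I) (s i : nat))%N.
Proof.
rewrite ffunE => nz; split.
  by apply: etrans (coef_ydeg nz); apply: eq_bigr => i _; rewrite expf_y.
move=> I vI; rewrite -(expf_x (sv s) (gD s) (I := I)) ?mem_SI // coef_xexp //.
by congr (_ + Posz _); apply: eq_bigr => i _; rewrite expf_y.
Qed.

Lemma Wf_complex : is_wcomplex Wf.
Proof. by move=> s; rewrite inE => /supp_Wf []. Qed.

Lemma Wf_split s I : s \in supp Wf -> validI I ->
  (\sum_(i in I) (s i : nat) + \sum_(i | i \notin I) (s i : nat))%N = d /\
  Posz (gD s I) = (D.2 I + Posz (\sum_(i | i \notin I) (s i : nat))%N)%R.
Proof.
rewrite inE => /supp_Wf [size_s gD_s] vI; split; last exact: gD_s.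
by rewrite -(sum_split I (fun i => (s i : nat))).
Qed.

Hypothesis cox_f : inCox f.
Hypothesis f_neq0 : f != 0.
Hypothesis f_not_divCox : forall I : {set 'I_m}, validI I -> ~ divCox I f.

Lemma Wf_supp_neq0 : supp Wf != set0.
Proof.
have [e nz] := mcoef_neq0 f_neq0; have [s [_ Wf_s]] := coef_simplex nz.
by apply/set0Pn; exists s; rewrite inE Wf_s.
Qed.

(* Since exponents are nonnegative, a_I <= D_I + d. *)
Lemma aI_Wf_le I : validI I -> (Posz (aI (supp Wf) I) <= D.2 I + Posz d)%R.
Proof.
move=> vI; have [s0 s0S] := set0Pn _ Wf_supp_neq0.
have nn : (0 <= D.2 I + Posz d)%R.
  have [] := Wf_split s0S vI; set sI := (\sum_(i in I) _)%N.
  by set sIc := (\sum_(i | _) _)%N; lia.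
rewrite -(gez0_abs nn) lez_nat; apply/bigmax_leqP => s sS.
rewrite -lez_nat gez0_abs //; have [] := Wf_split sS vI.
by set sI := (\sum_(i in I) _)%N; set sIc := (\sum_(i | _) _)%N; lia.
Qed.

(* If a_I < D_I + d, every monomial of f would contain x_I, and the quotient
   would again lie in the Cox ring, contradicting non-divisibility. *)
Lemma aI_Wf_ge I : validI I -> (D.2 I + Posz d <= Posz (aI (supp Wf) I))%R.
Proof.
move=> vI; have IS : I \in SI n by rewrite mem_SI.
rewrite leNgt; apply/negP => lt_aI.
have xI_in e : mcoef f e != 0 -> (0 < e (xidx I))%N.
  move=> nz; have [s [M Wf_s]] := coef_simplex nz.
  have sS : s \in supp Wf by rewrite inE Wf_s.
  rewrite (Mmatch_x M IS); have le_a := aI_ge I sS.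
  have [] := Wf_split sS vI; move: le_a lt_aI; set a := aI _ I.
  set sI := (\sum_(i in I) _)%N; set sIc := (\sum_(i | _) _)%N.
  by rewrite -ltz_nat; lia.
have [g eq_f] := mvar_dvd (xidx_lt IS) xI_in.
have [a gen_af] := cox_f.
apply: (f_not_divCox vI); exists g => //; exists (fun J => a J + (J == I))%N.
by rewrite -[X in gen_alg (X * _)]/(xpow R _) xpow_shift // -mulrA -eq_f.
Qed.

Lemma gW_Wf s I : s \in supp Wf -> I \in SI n -> gW Wf s I = gD s I.
Proof.
move=> sS; rewrite mem_SI => vI; apply/eqP; rewrite -eqz_nat; apply/eqP.
have le_a := aI_ge I sS; have a_le := aI_Wf_le vI; have a_ge := aI_Wf_ge vI.
have [] := Wf_split sS vI; move: le_a a_le a_ge; rewrite /gW; set a := aI _ I.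
by set sI := (\sum_(i in I) _)%N; set sIc := (\sum_(i | _) _)%N; lia.
Qed.

Lemma Fcx_Wf : Fcx Wf = f.
Proof.
have Mmatch_Wf e s : s \in supp Wf ->
    Mmatch e (sv s) (gW Wf s) = Mmatch e (sv s) (gD s).
  by move=> sS; apply: Mmatch_congr => I; exact: gW_Wf.
apply: mpoly_ext => e; have [/eqP f_e | nz] := boolP (mcoef f e == 0).
  rewrite f_e; apply/eqP/contraT => /mcoef_Fcx_neq0 [s sS].
  rewrite Mmatch_Wf // => M; move: sS; rewrite inE ffunE.
  by rewrite -(@mcoef_agree _ _ _ e) ?f_e ?eqxx // => j lt_j; exact: Mmatch_eq.
have [s [M Wf_s]] := coef_simplex nz.
have sS : s \in supp Wf by rewrite inE Wf_s.
by rewrite -Wf_s; apply: mcoef_Fcx_at; rewrite ?Mmatch_Wf.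
Qed.

End Surjectivity.

Local Close Scope ring_scope.

Theorem mainTheorem2 (R : comNzRingType) (n d : nat) (hn : 5 <= n) (hd : 1 <= d) :
  (* source: balanced R-weighted (d-1)-complexes on [n-1] *)
  let Src := fun W : {ffun simplex n d -> R} =>
    [/\ is_wcomplex W, supp W != set0 & balanced W] in
  (* target: nonzero homogeneous degree-d elements of Cox not divisible by any x_I *)
  let Tgt := fun f : P R n =>
    [/\ inCox f, f != 0%R, homog_deg f d
      & forall I : {set 'I_(n-1)}, validI I -> ~ divCox I f] in
  [/\ (forall W, Src W -> Tgt (Fcx W)),
      (forall W1 W2, Src W1 -> Src W2 -> Fcx W1 = Fcx W2 -> W1 = W2),
      (forall f, Tgt f -> exists2 W, Src W & Fcx W = f)
    & (forall Delta : {set simplex n d}, is_complex Delta ->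
       forall W : {ffun simplex n d -> R}, supp W = Delta -> balanced W ->
         homog_of (Fcx W) (DDelta Delta))].
Proof.
move=> Src Tgt; split.
- move=> W [cW nW bW]; split.
  + by apply: Fcx_inCox => //; apply: leq_trans hn.
  + exact: Fcx_neq0.
  + by exists (DDelta (supp W)); split => //; exact: Fcx_homog.
  + by move=> I; exact: Fcx_not_divCox.
- by move=> W1 W2 _ _; exact: Fcx_inj.
- move=> f [cox_f f_neq0 [D [homog_f deg_D]] f_not_divCox].
  have F_eq := Fcx_Wf homog_f deg_D cox_f f_neq0 f_not_divCox.
  have cW := Wf_complex homog_f deg_D.
  exists (Wf d f D) => //; split => //.
    exact: Wf_supp_neq0 homog_f deg_D f_neq0.
  by apply: balanced_of_inCox; rewrite // F_eq.
- by move=> Delta cD W sW _; exact: Fcx_homog.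
Qed.
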